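(* Let $L,R$ be nonempty subsets of a group $G$ and $s\in G$, and consider $2\mathrm{S}(G;L,R)$. (1) There exist words $w_{L,m}$ and $w_{L,n}$ in $L$ with $m\neq n$ such that $w_{L,m}s\sim w_{L,n}s$ if and only if there exists a word $w_{L,k}$ in $L$ of positive length with $w_{L,k}s\sim s$; moreover one can take $k=|m-n|$. (2) For $n\ge1$, there exists a word $w_{L,n}$ in $L$ with $w_{L,n}s\sim s$ if and only if there exists a word $w_{L^{-1},n}$ in $L^{-1}$ with $w_{L^{-1},n}s\sim s$. (3) If $g\in\langle L\rangle s\langle R\rangle$ and $k\ge 1$, then $w_{L,k}g\sim g$ for some word $w_{L,k}$ in $L$ of length $k$ if and only if $w'_{L,k}s\sim s$ for some word $w'_{L,k}$ in $L$ of length $k$.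
   Context: For nonempty subsets $L,R$ of a group $G$, the two-sided group digraph $2\mathrm{S}(G;L,R)$ has vertex set $G$ and a directed arc $(g,h)$ if and only if $h=l^{-1}gr$ for some $l\in L$, $r\in R$. $w_{S,n}$ denotes the value of a word $s_1\cdots s_n$ with $s_i\in S$. $g\sim h$ means $g$ is weakly connected to $h$: there is a sequence $g=g_0,\dots,g_n=h$ with, for each $i$, $(g_{i-1},g_i)$ or $(g_i,g_{i-1})$ an arc. $\langle S\rangle$ is the subgroup generated by $S$. *)

From HB Require Import structures.
From mathcomp Require Import all_boot.
From Stdlib Require Import Relations.
Set Implicit Arguments. Unset Strict Implicit. Unset Printing Implicit Defensive.
Local Open Scope group_scope.

Section TwoSided.
Variable G : groupType.

Definition is_word (S : G -> Prop) (n : nat) (g : G) : Prop :=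
  exists w : seq G, size w = n /\ (forall x, x \in w -> S x) /\ g = foldr mul 1 w.

Definition inv_set (S : G -> Prop) : G -> Prop := fun x => S x^-1.

Definition arc2S (L R : G -> Prop) (g h : G) : Prop :=
  exists l r, L l /\ R r /\ h = l^-1 * g * r.

(* g ~ h : weakly connected in 2S(G;L,R) (reflexive-symmetric-transitive
   closure of the arc relation = existence of an undirected walk) *)
Definition wconn (L R : G -> Prop) : G -> G -> Prop :=
  clos_refl_sym_trans G (arc2S L R).

Inductive in_gen (S : G -> Prop) : G -> Prop :=
| gen_base x : S x -> in_gen S x
| gen_one : in_gen S 1
| gen_mul x y : in_gen S x -> in_gen S y -> in_gen S (x * y)
| gen_inv x : in_gen S x -> in_gen S x^-1.

End TwoSided.

From Stdlib Require Import Relation_Operators Setoid.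
From HB Require Import structures.
From mathcomp Require Import all_boot.
Set Implicit Arguments. Unset Strict Implicit. Unset Printing Implicit Defensive.
Local Open Scope group_scope.

(* The arcs of 2S(G;L,R) are exactly the pairs (l y, y r) with l in L, r in R.
   Hence weak connectivity is preserved by left multiplication by <L> and, via
   inversion g |-> g^-1 (which exchanges the roles of L and R), by right
   multiplication by <R>.  Fixing r0 in R, a word w of length n in L satisfies
   w x ~ x r0^n, so words of the same length act alike: splitting the longer word
   gives (1), multiplying by w^-1 gives (2), and w (a s) ~ a (w s) for a in <L>
   gives (3). *)

Section Words.
Variables (G : groupType) (S : G -> Prop).

Lemma foldr_mulg_cat (s t : seq G) :
  foldr mul 1 (s ++ t) = foldr mul 1 s * foldr mul 1 t.
Proof. by elim: s => [|x s IH] /=; rewrite ?mul1g // IH mulgA. Qed.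

Lemma is_word0 : is_word S 0 1.
Proof. by exists [::]. Qed.

Lemma is_word1 x : S x -> is_word S 1 x.
Proof. by exists [:: x]; rewrite /= mulg1; do 2!split=> //; move=> y /[!inE] /eqP ->. Qed.

Lemma is_word_ind (P : nat -> G -> Prop) :
    P 0 1 -> (forall x n w, S x -> is_word S n w -> P n w -> P n.+1 (x * w)) ->
  forall n w, is_word S n w -> P n w.
Proof.
move=> P0 PS n w [s [<- [Ss ->]]]; elim: s Ss => //= x s IH Ss.
have Ss' y : y \in s -> S y by move=> sy; apply: Ss; rewrite inE sy orbT.
by apply: PS; [apply: Ss; rewrite inE eqxx | exists s | apply: IH].
Qed.

Lemma is_word_mul m n u v : is_word S m u -> is_word S n v -> is_word S (m + n) (u * v).
Proof.
move=> [s [<- [Ss ->]]] [t [<- [St ->]]]; exists (s ++ t).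
split; first by rewrite size_cat.
by split; [move=> x /[!mem_cat] /orP [/Ss | /St] | rewrite foldr_mulg_cat].
Qed.

Lemma is_word_split m n w :
  is_word S (m + n) w -> exists u v, [/\ is_word S m u, is_word S n v & w = u * v].
Proof.
move=> [s [sz [Ss ->]]]; exists (foldr mul 1 (take m s)), (foldr mul 1 (drop m s)).
split; last by rewrite -foldr_mulg_cat cat_take_drop.
- exists (take m s); split; first by rewrite size_takel // sz leq_addr.
  by split=> // x /mem_take /Ss.
- exists (drop m s); split; first by rewrite size_drop sz addKn.
  by split=> // x /mem_drop /Ss.
Qed.

End Words.

Lemma is_word_invg (G : groupType) (S S' : G -> Prop) n w :
  (forall x, S x -> S' x^-1) -> is_word S n w -> is_word S' n w^-1.
Proof.
move=> SS'; elim/is_word_ind: n w / => [|x n w Sx _ IH]; first by rewrite invg1; apply: is_word0.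
by rewrite invgM -addn1; apply: is_word_mul IH (is_word1 (SS' _ Sx)).
Qed.

Lemma in_gen_word (G : groupType) (S T : G -> Prop) n w :
  (forall x, S x -> in_gen T x) -> is_word S n w -> in_gen T w.
Proof.
move=> ST; elim/is_word_ind: n w / => [|x n w Sx _ IH]; first exact: gen_one.
by apply: gen_mul IH; apply: ST.
Qed.

Lemma in_gen_expg (G : groupType) (S : G -> Prop) x n : in_gen S x -> in_gen S (x ^+ n).
Proof. by move=> Sx; elim: n => [|n IH]; [apply: gen_one | rewrite expgS; apply: gen_mul]. Qed.

Section Connectivity.
Variables (G : groupType) (L R : G -> Prop).

Lemma wconn_sym x y : wconn L R x y -> wconn L R y x.
Proof. exact: rst_sym. Qed.

Lemma wconn_trans y x z : wconn L R x y -> wconn L R y z -> wconn L R x z.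
Proof. exact: rst_trans. Qed.

Lemma wconn_mul l r y : L l -> R r -> wconn L R (l * y) (y * r).
Proof. by move=> Hl Hr; apply: rst_step; exists l, r; rewrite mulKg. Qed.

Lemma wconn_map (L' R' : G -> Prop) (f : G -> G) :
    (forall l r y, L l -> R r -> wconn L' R' (f (l * y)) (f (y * r))) ->
  forall x y, wconn L R x y -> wconn L' R' (f x) (f y).
Proof.
move=> fP x y; elim=> {x y} [x _ [l [r [Hl [Hr ->]]]] | x | x y _ IH | x y z _ IH1 _ IH2].
- by have := fP l r (l^-1 * x) Hl Hr; rewrite mulVKg.
- exact: rst_refl.
- exact: rst_sym.
- exact: rst_trans IH2.
Qed.

Lemma wconn_invg x y : wconn L R x y -> wconn R L x^-1 y^-1.
Proof.
apply: wconn_map => l r z Hl Hr; apply: rst_step; exists r, l.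
by rewrite !invgM !mulgA mulgVK.
Qed.

Lemma wconn_transl x y z :
  wconn L R x y -> wconn L R x z <-> wconn L R y z.
Proof.
by move=> xy; split=> [|yz]; [apply: wconn_trans; apply: wconn_sym | apply: wconn_trans yz].
Qed.

Lemma wconn_transr x y z :
  wconn L R y z -> wconn L R x y <-> wconn L R x z.
Proof.
by move=> yz; split=> [xy|xz]; [apply: wconn_trans yz | apply: wconn_trans xz (wconn_sym yz)].
Qed.

Hypothesis hR : exists r, R r.

Lemma wconn_mull l x y : L l -> wconn L R x y -> wconn L R (l * x) (l * y).
Proof.
have [r0 Hr0] := hR; move=> Hl; apply: wconn_map => l' r z Hl' Hr.
apply: (wconn_trans (wconn_mul _ Hl Hr)); rewrite -mulgA.
apply: (wconn_trans (wconn_mul _ Hl' Hr0)).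
exact/wconn_sym/wconn_mul.
Qed.

Lemma wconn_mulVl l x y : L l -> wconn L R x y -> wconn L R (l^-1 * x) (l^-1 * y).
Proof.
have [r0 Hr0] := hR; move=> Hl; apply: wconn_map => l' r z Hl' Hr.
apply: (@wconn_trans (l' * z * r0^-1)).
  apply: wconn_sym; have := wconn_mul (l^-1 * (l' * z * r0^-1)) Hl Hr0.
  by rewrite mulVKg -(mulgA l^-1) mulgVK.
apply: (@wconn_trans z).
  by have := wconn_mul (z * r0^-1) Hl' Hr0; rewrite mulgVK mulgA.
by have := wconn_mul (l^-1 * z) Hl Hr; rewrite mulVKg mulgA.
Qed.

Lemma wconn_mull_gen a : in_gen L a ->
  forall x y, wconn L R x y <-> wconn L R (a * x) (a * y).
Proof.
elim=> {a} [l Hl | | a b _ IHa _ IHb | a _ IHa] x y.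
- split; first exact: wconn_mull.
  by move=> /(wconn_mulVl Hl); rewrite !mulKg.
- by rewrite !mul1g.
- by rewrite -!mulgA -IHa -IHb.
- by rewrite (IHa (a^-1 * x)) !mulVKg.
Qed.

End Connectivity.

Lemma wconn_invgE (G : groupType) (L R : G -> Prop) x y :
  wconn R L x^-1 y^-1 <-> wconn L R x y.
Proof. by split; [move/wconn_invg; rewrite !invgK | exact: wconn_invg]. Qed.

Lemma wconn_mulr_gen (G : groupType) (L R : G -> Prop) (hL : exists l, L l) b :
  in_gen R b -> forall x y, wconn L R x y <-> wconn L R (x * b) (y * b).
Proof.
move=> Rb x y; rewrite -[wconn L R x y]wconn_invgE -[wconn L R (x * b) _]wconn_invgE.
by rewrite !invgM; apply: wconn_mull_gen => //; apply: gen_inv.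
Qed.

Section WordsIn2S.
Variables (G : groupType) (L R : G -> Prop).
Hypotheses (hL : exists l, L l) (hR : exists r, R r).

Lemma wconn_word_mul r0 n w x : R r0 -> is_word L n w -> wconn L R (w * x) (x * r0 ^+ n).
Proof.
move=> Hr0; elim/is_word_ind: n w / => [|l n w Hl _ IH].
  by rewrite mul1g expg0 mulg1; apply: rst_refl.
rewrite expgSr mulgA -(mulgA l); apply: wconn_trans (wconn_mul _ Hl Hr0) _.
exact: (wconn_mulr_gen hL (gen_base Hr0) _ _).1 IH.
Qed.

Lemma wconn_word_mul2 n u v x y : is_word L n u -> is_word L n v ->
  wconn L R (u * x) (v * y) <-> wconn L R x y.
Proof.
have [r0 Hr0] := hR; move=> Hu Hv.
rewrite (wconn_transl _ (wconn_word_mul x Hr0 Hu)).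
rewrite (wconn_transr _ (wconn_word_mul y Hr0 Hv)).
by rewrite -(wconn_mulr_gen hL (in_gen_expg n (gen_base Hr0))).
Qed.

Lemma wconn_word_commute n w a x : is_word L n w -> in_gen L a ->
  wconn L R (w * (a * x)) (a * (w * x)).
Proof.
have [r0 Hr0] := hR; move=> Hw La.
apply: wconn_trans (wconn_word_mul (a * x) Hr0 Hw) _; rewrite -mulgA.
exact/wconn_sym/(wconn_mull_gen hR La _ _).1/wconn_word_mul.
Qed.

Lemma wconn_mulg_invg a x : in_gen L a ->
  wconn L R (a * x) x <-> wconn L R (a^-1 * x) x.
Proof.
move=> La; rewrite (wconn_mull_gen hR (gen_inv La) (a * x)) mulKg.
by split; apply: wconn_sym.
Qed.

Lemma wconn_word_loop_sub m n u v s : n <= m -> is_word L m u -> is_word L n v ->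
  wconn L R (u * s) (v * s) -> exists w, is_word L (m - n) w /\ wconn L R (w * s) s.
Proof.
move=> le_nm; rewrite -{1}(subnKC le_nm) => /is_word_split [u1 [u2 [Hu1 Hu2 ->]]] Hv.
by rewrite -mulgA (wconn_word_mul2 _ _ Hu1 Hv); exists u2.
Qed.

Lemma wconn_word_loop_dist m n u v s : is_word L m u -> is_word L n v ->
    wconn L R (u * s) (v * s) ->
  exists w, is_word L (maxn m n - minn m n) w /\ wconn L R (w * s) s.
Proof.
case: (leqP n m) => [le_nm | /ltnW le_mn] Hu Hv uv.
  exact: wconn_word_loop_sub uv.
exact: wconn_word_loop_sub Hv Hu (wconn_sym uv).
Qed.

Lemma wconn_word_loop_inv_set n s :
  (exists w, is_word L n w /\ wconn L R (w * s) s) <->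
  (exists w, is_word (inv_set L) n w /\ wconn L R (w * s) s).
Proof.
split=> -[w [Hw ws]]; exists w^-1; split.
- by apply: is_word_invg Hw => x; rewrite /inv_set invgK.
- exact: (wconn_mulg_invg s (in_gen_word (@gen_base _ _) Hw)).1 ws.
- exact: is_word_invg Hw.
- have Lw : in_gen L w.
    by apply: in_gen_word Hw => x Lx; rewrite -[x]invgK; apply/gen_inv/gen_base.
  exact: (wconn_mulg_invg s Lw).1 ws.
Qed.

Lemma wconn_word_loop_double_coset k w a b s :
    is_word L k w -> in_gen L a -> in_gen R b ->
  wconn L R (w * (a * s * b)) (a * s * b) <-> wconn L R (w * s) s.
Proof.
move=> Hw La Rb; rewrite mulgA -(wconn_mulr_gen hL Rb).
rewrite (wconn_transl _ (wconn_word_commute s Hw La)).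
by rewrite -(wconn_mull_gen hR La).
Qed.

End WordsIn2S.

Theorem mainTheorem15 (G : groupType) (L R : G -> Prop)
  (hL : exists l, L l) (hR : exists r, R r) (s : G) :
  (* (1) *)
  ((exists (m n : nat) (u v : G), m <> n /\ is_word L m u /\ is_word L n v /\
       wconn L R (u * s)%g (v * s)%g)
   <->
   (exists (k : nat) (w : G), 0 < k /\ is_word L k w /\ wconn L R (w * s)%g s))
  /\
  (forall (m n : nat) (u v : G), m <> n -> is_word L m u -> is_word L n v ->
     wconn L R (u * s)%g (v * s)%g ->
     exists w : G, is_word L (maxn m n - minn m n) w /\ wconn L R (w * s)%g s)
  /\
  (* (2) *)
  (forall n : nat, 1 <= n ->
     ((exists w : G, is_word L n w /\ wconn L R (w * s)%g s) <->
      (exists w : G, is_word (inv_set L) n w /\ wconn L R (w * s)%g s)))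
  /\
  (* (3) *)
  (forall (g : G) (k : nat),
     (exists a b : G, in_gen L a /\ in_gen R b /\ g = (a * s * b)%g) ->
     1 <= k ->
     ((exists w : G, is_word L k w /\ wconn L R (w * g)%g g) <->
      (exists w' : G, is_word L k w' /\ wconn L R (w' * s)%g s))).
Proof.
split; [split | split; [| split]].
- move=> [m [n [u [v [neq_mn [Hu [Hv uv]]]]]]].
  have [w [Hw ws]] := wconn_word_loop_dist hL hR Hu Hv uv.
  exists (maxn m n - minn m n), w; split=> //.
  by rewrite subn_gt0; case: (ltngtP m n) neq_mn.
- move=> [k [w [k_gt0 [Hw ws]]]]; exists k, 0, w, 1.
  split; first by move=> k0; rewrite k0 in k_gt0.
  by do 2?split=> //; [apply: is_word0 | rewrite mul1g].
- by move=> m n u v _; apply: wconn_word_loop_dist.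
- by move=> n _; apply: wconn_word_loop_inv_set.
- move=> g k [a [b [La [Rb ->]]]] _.
  by split=> -[w [Hw ws]]; exists w; split=> //; move: ws;
    rewrite (wconn_word_loop_double_coset hL hR s Hw La Rb).
Qed.
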